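(* Let $S_\infty$ be the group of all permutations of $\mathbb{N}$ with composition $pq=p\circ q$ and the topology of pointwise convergence, and let $P\subseteq S_\infty$ be the set of all permutations having at least one infinite cycle. Then for every compact set $K\subseteq S_\infty$ there is $p\in S_\infty$ with $pK\subseteq P$. Consequently $P$ is not Haar meager in $S_\infty$, although $P$ is meager in $S_\infty$.
   Context: Let $G$ be a Polish group. A set $A\subseteq G$ is Haar meager if there exist a Borel set $B\supseteq A$, a compact metric space $K$ and a continuous map $f\colon K\to G$ such that $f^{-1}(gBh)$ is meager in $K$ for every $g,h\in G$. *)

From Stdlib Require Import Reals ZArith List.
Open Scope R_scope.

Record Sinf : Type := MkSinf {
  fwd : nat -> nat;
  bwd : nat -> nat;
  fwd_bwd : forall n, fwd (bwd n) = n;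
  bwd_fwd : forall n, bwd (fwd n) = n }.

Definition smul (p q : Sinf) : Sinf.
Proof.
  refine (MkSinf (fun n => fwd p (fwd q n)) (fun n => bwd q (bwd p n)) _ _);
  intro n; rewrite ?fwd_bwd, ?bwd_fwd; reflexivity.
Defined.

Definition inv (p : Sinf) : Sinf :=
  MkSinf (bwd p) (fwd p) (bwd_fwd p) (fwd_bwd p).

Definition Sinf_open (U : Sinf -> Prop) : Prop :=
  forall p, U p -> exists N : nat,
    forall q, (forall n, (n < N)%nat -> fwd q n = fwd p n) -> U q.

Definition zpow (p : Sinf) (k : Z) (n : nat) : nat :=
  match k with
  | Z0 => n
  | Zpos m => Nat.iter (Pos.to_nat m) (fwd p) n
  | Zneg m => Nat.iter (Pos.to_nat m) (bwd p) n
  end.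

Definition cycle_of (p : Sinf) (n : nat) (m : nat) : Prop :=
  exists k : Z, zpow p k n = m.

Definition finite_set (A : nat -> Prop) : Prop :=
  exists l : list nat, forall m, A m -> In m l.

Definition has_infinite_cycle (p : Sinf) : Prop :=
  exists n, ~ finite_set (cycle_of p n).

Definition compact_in {X : Type} (op : (X -> Prop) -> Prop) (A : X -> Prop) : Prop :=
  forall C : (X -> Prop) -> Prop,
    (forall U, C U -> op U) ->
    (forall x, A x -> exists U, C U /\ U x) ->
    exists l : list (X -> Prop),
      (forall U, In U l -> C U) /\ (forall x, A x -> exists U, In U l /\ U x).

Definition closure {X : Type} (op : (X -> Prop) -> Prop) (A : X -> Prop) (x : X) : Prop :=
  forall U, op U -> U x -> exists y, U y /\ A y.

Definition nowhere_dense {X : Type} (op : (X -> Prop) -> Prop) (A : X -> Prop) : Prop :=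
  forall U, op U -> (forall x, U x -> closure op A x) -> forall x, ~ U x.

Definition meager {X : Type} (op : (X -> Prop) -> Prop) (A : X -> Prop) : Prop :=
  exists F : nat -> X -> Prop,
    (forall n, nowhere_dense op (F n)) /\ (forall x, A x -> exists n, F n x).

Inductive borel {X : Type} (op : (X -> Prop) -> Prop) : (X -> Prop) -> Prop :=
  | borel_open : forall U, op U -> borel op U
  | borel_compl : forall A, borel op A -> borel op (fun x => ~ A x)
  | borel_cunion : forall F : nat -> X -> Prop,
      (forall n, borel op (F n)) -> borel op (fun x => exists n, F n x)
  | borel_ext : forall A B, borel op A -> (forall x, A x <-> B x) -> borel op B.

Definition continuous {X Y : Type} (opX : (X -> Prop) -> Prop)
  (opY : (Y -> Prop) -> Prop) (f : X -> Y) : Prop :=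
  forall V, opY V -> opX (fun x => V (f x)).

Definition is_metric {K : Type} (d : K -> K -> R) : Prop :=
  (forall x y, 0 <= d x y) /\
  (forall x y, d x y = 0 <-> x = y) /\
  (forall x y, d x y = d y x) /\
  (forall x y z, d x z <= d x y + d y z).

Definition metric_open {K : Type} (d : K -> K -> R) (U : K -> Prop) : Prop :=
  forall x, U x -> exists eps, 0 < eps /\ forall y, d x y < eps -> U y.

(* Haar meager subsets of S_infinity.  g B h is written as the set of x with
   g^{-1} x h^{-1} in B.  The compact metric space K is required nonempty. *)
Definition haar_meager (A : Sinf -> Prop) : Prop :=
  exists B : Sinf -> Prop,
    borel Sinf_open B /\ (forall x, A x -> B x) /\
    exists (K : Type) (d : K -> K -> R),
      inhabited K /\ is_metric d /\ compact_in (metric_open d) (fun _ => True) /\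
      exists f : K -> Sinf,
        continuous (metric_open d) Sinf_open f /\
        forall g h : Sinf,
          meager (metric_open d)
                 (fun k => B (smul (inv g) (smul (f k) (inv h)))).

(* Compactness of K bounds k x and k^-1 x for x < n uniformly in k in K, by some beta n.
   Along blocks growing fast enough relative to beta, choose p translating a source block
   onto a target block lying beyond it: k cannot move the target block of time t past the
   next source block (bound on k), nor below its start (bound on k^-1), so the orbit of 0
   under pk runs through the target blocks and is infinite.  If P were Haar meager, witnessed
   by f : K -> S_oo, the translate by p of the compact set f(K) lies in P, making the whole
   compact metric space K meager, against the Baire category theorem.  P is meager: every
   basic open set contains a permutation putting n on a finite cycle (redirect a long stretch
   of the orbit of n back to its start), and finite cycles persist on a neighbourhood. *)

From Stdlib Require Import Reals ZArith List Lia Lra FinFun Classical ClassicalEpsilon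
  FunctionalExtensionality ProofIrrelevance.
Open Scope nat_scope.

Lemma le_list_max (l : list nat) (y : nat) : In y l -> y <= list_max l.
Proof.
  intro Hy. pose proof (proj1 (list_max_le l (list_max l)) (le_n _)) as H.
  rewrite Forall_forall in H. auto.
Qed.

Lemma finite_set_sub (A B : nat -> Prop) :
  (forall m, A m -> B m) -> finite_set B -> finite_set A.
Proof. intros HAB [l Hl]. exists l. auto. Qed.

Lemma finite_set_bounded (A : nat -> Prop) :
  finite_set A -> exists M, forall m, A m -> m < M.
Proof.
  intros [l Hl]. exists (S (list_max l)). intros m Am.
  pose proof (le_list_max l m (Hl m Am)). lia.
Qed.

Lemma finite_image_Zinterval (f : Z -> nat) (lo hi : Z) :
  finite_set (fun m => exists k, (lo <= k <= hi)%Z /\ f k = m).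
Proof.
  exists (map (fun i => f (lo + Z.of_nat i)%Z) (seq 0 (Z.to_nat (hi - lo + 1)))).
  intros m (k & Hk & <-). apply in_map_iff. exists (Z.to_nat (k - lo)).
  split; [f_equal; lia | apply in_seq; lia].
Qed.

Lemma injective_unbounded (f : nat -> nat) (N : nat) :
  Injective f -> exists i, N <= f i.
Proof.
  intro Hf. apply NNPP. intro Hbelow.
  assert (Hincl : incl (map f (seq 0 (S N))) (seq 0 N)).
  { intros y Hy. apply in_map_iff in Hy. destruct Hy as (i & <- & _).
    apply in_seq. apply not_ex_all_not with (n := i) in Hbelow. lia. }
  pose proof (NoDup_incl_length (Injective_map_NoDup Hf (seq_NoDup (S N) 0)) Hincl) as H.
  rewrite length_map, !length_seq in H. lia.
Qed.

Lemma zpow_of_nat (p : Sinf) (i n : nat) : zpow p (Z.of_nat i) n = Nat.iter i (fwd p) n.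
Proof. destruct i; [reflexivity|]. simpl. now rewrite SuccNat2Pos.id_succ. Qed.

Lemma zpow_opp_of_nat (p : Sinf) (i n : nat) : zpow p (- Z.of_nat i) n = Nat.iter i (bwd p) n.
Proof. destruct i; [reflexivity|]. simpl. now rewrite SuccNat2Pos.id_succ. Qed.

Lemma zpow_succ (p : Sinf) (k : Z) (n : nat) : zpow p (Z.succ k) n = fwd p (zpow p k n).
Proof.
  destruct (Z_le_gt_dec 0 k) as [Hk|Hk].
  - rewrite <- (Z2Nat.id k Hk), <- Nat2Z.inj_succ, !zpow_of_nat. apply Nat.iter_succ.
  - replace k with (- Z.of_nat (S (Z.to_nat (- k - 1))))%Z by lia.
    replace (Z.succ _) with (- Z.of_nat (Z.to_nat (- k - 1)))%Z by lia.
    rewrite !zpow_opp_of_nat, Nat.iter_succ. symmetry. apply fwd_bwd.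
Qed.

Lemma zpow_pred (p : Sinf) (k : Z) (n : nat) : zpow p (Z.pred k) n = bwd p (zpow p k n).
Proof. rewrite <- (Z.succ_pred k) at 2. rewrite zpow_succ. symmetry. apply bwd_fwd. Qed.

Lemma zpow_add (p : Sinf) (j k : Z) (n : nat) : zpow p (j + k) n = zpow p j (zpow p k n).
Proof.
  induction j as [|j IH|j IH] using Z.peano_ind; [reflexivity| |].
  - rewrite Z.add_succ_l, !zpow_succ. now f_equal.
  - rewrite Z.add_pred_l, !zpow_pred. now f_equal.
Qed.

Lemma cycle_of_fwd (p : Sinf) (n m : nat) : cycle_of p n m -> cycle_of p n (fwd p m).
Proof. intros [k <-]. exists (Z.succ k). apply zpow_succ. Qed.

Lemma cycle_of_bwd (p : Sinf) (n m : nat) : cycle_of p n m -> cycle_of p n (bwd p m).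
Proof. intros [k <-]. exists (Z.pred k). apply zpow_pred. Qed.

Lemma cycle_of_sub (p : Sinf) (A : nat -> Prop) (n : nat) :
  A n -> (forall y, A y -> A (fwd p y)) -> (forall y, A y -> exists z, A z /\ fwd p z = y) ->
  forall m, cycle_of p n m -> A m.
Proof.
  intros An Afwd Aonto m [k <-].
  induction k as [|k IH|k IH] using Z.peano_ind; [exact An| |].
  - rewrite zpow_succ. auto.
  - rewrite zpow_pred. destruct (Aonto _ IH) as (z & Az & <-). now rewrite bwd_fwd.
Qed.

Lemma periodic_cycle_finite (p : Sinf) (n : nat) (d : Z) :
  d <> 0%Z -> zpow p d n = n -> finite_set (cycle_of p n).
Proof.
  intros Hd Hper.
  assert (Hpos : exists d', (0 < d')%Z /\ zpow p d' n = n).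
  { destruct (Z_lt_le_dec 0 d) as [Hlt|Hle]; [now exists d|].
    exists (- d)%Z. split; [lia|].
    rewrite <- Hper at 1. rewrite <- zpow_add. now replace (- d + d)%Z with 0%Z by lia. }
  clear d Hd Hper. destruct Hpos as (d & Hd & Hper).
  apply finite_set_sub with (B := fun m => exists k, (0 <= k <= d - 1)%Z /\ zpow p k n = m);
    [|apply finite_image_Zinterval].
  apply cycle_of_sub.
  - exists 0%Z. split; [lia|reflexivity].
  - intros y (k & Hk & <-). rewrite <- zpow_succ.
    destruct (Z.eq_dec k (d - 1)) as [->|Hne].
    + exists 0%Z. split; [lia|]. now replace (Z.succ (d - 1)) with d by lia.
    + exists (Z.succ k). split; [lia|reflexivity].
  - intros y (k & Hk & <-). destruct (Z.eq_dec k 0) as [->|Hne].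
    + exists (zpow p (d - 1) n). split; [exists (d - 1)%Z; split; [lia|reflexivity]|].
      rewrite <- zpow_succ. now replace (Z.succ (d - 1)) with d by lia.
    + exists (zpow p (Z.pred k) n). split; [exists (Z.pred k); split; [lia|reflexivity]|].
      now rewrite <- zpow_succ, Z.succ_pred.
Qed.

Lemma infinite_cycle_of_unbounded_orbit (p : Sinf) (n : nat) :
  (forall M, exists t, M <= Nat.iter t (fwd p) n) -> ~ finite_set (cycle_of p n).
Proof.
  intros Hunb Hfin. destruct (finite_set_bounded _ Hfin) as [M HM].
  destruct (Hunb M) as [t Ht].
  assert (Hin : cycle_of p n (Nat.iter t (fwd p) n)) by (exists (Z.of_nat t); apply zpow_of_nat).
  specialize (HM _ Hin). lia.
Qed.

Definition swap_fun (a b y : nat) : nat :=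
  if Nat.eqb y a then b else if Nat.eqb y b then a else y.

Lemma swap_fun_l (a b : nat) : swap_fun a b a = b.
Proof. unfold swap_fun. now rewrite Nat.eqb_refl. Qed.

Lemma swap_fun_r (a b : nat) : swap_fun a b b = a.
Proof.
  unfold swap_fun. destruct (Nat.eqb_spec b a); [congruence|]. now rewrite Nat.eqb_refl.
Qed.

Lemma swap_fun_other (a b y : nat) : y <> a -> y <> b -> swap_fun a b y = y.
Proof.
  intros Ha Hb. unfold swap_fun.
  destruct (Nat.eqb_spec y a), (Nat.eqb_spec y b); congruence.
Qed.

Lemma swap_fun_involutive (a b y : nat) : swap_fun a b (swap_fun a b y) = y.
Proof.
  destruct (Nat.eq_dec y a) as [->|Ha]; [now rewrite swap_fun_l, swap_fun_r|].
  destruct (Nat.eq_dec y b) as [->|Hb]; [now rewrite swap_fun_r, swap_fun_l|].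
  now rewrite !(swap_fun_other a b y Ha Hb).
Qed.

Definition swap (a b : nat) : Sinf :=
  MkSinf (swap_fun a b) (swap_fun a b) (swap_fun_involutive a b) (swap_fun_involutive a b).

Definition agree_below (N : nat) (p q : Sinf) : Prop := forall n, n < N -> fwd p n = fwd q n.

Lemma agree_below_open (N : nat) (q : Sinf) : Sinf_open (fun r => agree_below N r q).
Proof. intros r Hr. exists N. intros r' Hr' n Hn. rewrite Hr'; auto. Qed.

Section Shortcut.

Variables (x : Sinf) (n : nat) (lo hi : Z).
Hypothesis orbit_injective : forall j k, zpow x j n = zpow x k n -> j = k.
Hypothesis lo_le_hi : (lo <= hi)%Z.

(* Redirect [x^hi n] to [x^lo n]: the orbit segment from [lo] to [hi] becomes a cycle. *)
Definition shortcut : Sinf := smul (swap (zpow x lo n) (zpow x (hi + 1) n)) x.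

Lemma shortcut_step (k : Z) :
  (lo <= k < hi)%Z -> fwd shortcut (zpow x k n) = zpow x (k + 1) n.
Proof.
  intro Hk. simpl. rewrite <- zpow_succ.
  apply swap_fun_other; intro E; apply orbit_injective in E; lia.
Qed.

Lemma shortcut_last : fwd shortcut (zpow x hi n) = zpow x lo n.
Proof. simpl. rewrite <- zpow_succ. apply swap_fun_r. Qed.

Lemma shortcut_cycle_finite : (lo <= 0 <= hi)%Z -> finite_set (cycle_of shortcut n).
Proof.
  intro H0.
  apply finite_set_sub with (B := fun m => exists k, (lo <= k <= hi)%Z /\ zpow x k n = m);
    [|apply finite_image_Zinterval].
  apply cycle_of_sub.
  - exists 0%Z. split; [lia|reflexivity].
  - intros y (k & Hk & <-). destruct (Z.eq_dec k hi) as [->|Hne].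
    + rewrite shortcut_last. exists lo. split; [lia|reflexivity].
    + rewrite shortcut_step by lia. exists (k + 1)%Z. split; [lia|reflexivity].
  - intros y (k & Hk & <-). destruct (Z.eq_dec k lo) as [->|Hne].
    + exists (zpow x hi n). split; [exists hi; split; [lia|reflexivity]|]. apply shortcut_last.
    + exists (zpow x (k - 1) n). split; [exists (k - 1)%Z; split; [lia|reflexivity]|].
      rewrite shortcut_step by lia. f_equal. lia.
Qed.

Lemma shortcut_agree_below (N : nat) :
  N <= zpow x (lo - 1) n -> N <= zpow x hi n -> agree_below N shortcut x.
Proof.
  intros Hlo Hhi y Hy. simpl. apply swap_fun_other; intro E.
  - apply (f_equal (bwd x)) in E. rewrite bwd_fwd, <- zpow_pred in E.
    replace (Z.pred lo) with (lo - 1)%Z in E by lia. lia.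
  - rewrite Z.add_1_r, zpow_succ in E. apply (f_equal (bwd x)) in E.
    rewrite !bwd_fwd in E. lia.
Qed.

End Shortcut.

Lemma close_cycle_below (x : Sinf) (N n : nat) :
  exists q, agree_below N q x /\ finite_set (cycle_of q n).
Proof.
  destruct (classic (exists d, d <> 0%Z /\ zpow x d n = n)) as [(d & Hd & Hper)|Haper].
  { exists x. split; [intros y _; reflexivity|]. exact (periodic_cycle_finite x n d Hd Hper). }
  assert (Hinj : forall j k, zpow x j n = zpow x k n -> j = k).
  { intros j k E. apply NNPP. intro Hne. apply Haper. exists (j - k)%Z. split; [lia|].
    replace (j - k)%Z with (- k + j)%Z by lia.
    rewrite zpow_add, E, <- zpow_add. now replace (- k + k)%Z with 0%Z by lia. }
  destruct (injective_unbounded (fun i => zpow x (Z.of_nat i) n) N) as [i Hi].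
  { intros i i' E. apply Hinj in E. lia. }
  destruct (injective_unbounded (fun j => zpow x (- Z.of_nat j - 1) n) N) as [j Hj].
  { intros j j' E. apply Hinj in E. lia. }
  exists (shortcut x n (- Z.of_nat j) (Z.of_nat i)). split.
  - apply shortcut_agree_below; auto.
  - apply shortcut_cycle_finite; auto; lia.
Qed.

Lemma bwd_eq_of_fwd (p q : Sinf) (y : nat) : fwd p (bwd q y) = y -> bwd p y = bwd q y.
Proof. intro H. rewrite <- H at 1. apply bwd_fwd. Qed.

Lemma cycle_of_agree_sub (q r : Sinf) (n M : nat) :
  (forall m, cycle_of q n m -> m < M) -> agree_below M r q ->
  forall m, cycle_of r n m -> cycle_of q n m.
Proof.
  intros Hbound Hagree. apply cycle_of_sub.
  - now exists 0%Z.
  - intros y Hy. rewrite Hagree by auto. now apply cycle_of_fwd.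
  - intros y Hy. exists (bwd q y). split; [now apply cycle_of_bwd|].
    rewrite Hagree by (apply Hbound, cycle_of_bwd, Hy). apply fwd_bwd.
Qed.

Lemma infinite_cycle_at_nowhere_dense (n : nat) :
  nowhere_dense Sinf_open (fun p => ~ finite_set (cycle_of p n)).
Proof.
  intros U HU Hdense x Ux. destruct (HU x Ux) as [N HN].
  destruct (close_cycle_below x N n) as (q & Hqx & Hfin).
  destruct (finite_set_bounded _ Hfin) as [M HM].
  destruct (Hdense q (HN q Hqx) _ (agree_below_open M q)) as (r & Hrq & Hinf);
    [intros y _; reflexivity|].
  exact (Hinf (finite_set_sub _ _ (cycle_of_agree_sub q r n M HM Hrq) Hfin)).
Qed.

Theorem has_infinite_cycle_meager : meager Sinf_open has_infinite_cycle.
Proof.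
  exists (fun n p => ~ finite_set (cycle_of p n)).
  split; [exact infinite_cycle_at_nowhere_dense | intros p Hp; exact Hp].
Qed.

Lemma compact_increasing_cover {X : Type} (op : (X -> Prop) -> Prop) (A : X -> Prop)
  (U : nat -> X -> Prop) :
  compact_in op A -> (forall m, op (U m)) -> (forall m x, U m x -> U (S m) x) ->
  (forall x, A x -> exists m, U m x) -> exists M, forall x, A x -> U M x.
Proof.
  intros HA Uopen Umono Ucover.
  assert (Ule : forall m M x, m <= M -> U m x -> U M x) by (intros m M x H; induction H; auto).
  destruct (HA (fun V => exists m, V = U m)) as (l & Hl & Hsub).
  - intros V [m ->]. apply Uopen.
  - intros x Ax. destruct (Ucover x Ax) as [m Hm]. exists (U m). eauto.
  - destruct (choice (fun (V : X -> Prop) m => (exists m', V = U m') -> V = U m)) as [idx Hidx].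
    { intro V. destruct (classic (exists m, V = U m)) as [[m Hm]|Hno]; [exists m|exists 0]; tauto. }
    exists (list_max (map idx l)). intros x Ax. destruct (Hsub x Ax) as (V & HV & Vx).
    rewrite (Hidx V (Hl V HV)) in Vx. apply (Ule (idx V)); [|exact Vx].
    apply le_list_max, in_map, HV.
Qed.

Lemma compact_image {X Y : Type} (opX : (X -> Prop) -> Prop) (opY : (Y -> Prop) -> Prop)
  (f : X -> Y) :
  continuous opX opY f -> compact_in opX (fun _ => True) ->
  compact_in opY (fun y => exists x, f x = y).
Proof.
  intros Hf HX C Copen Ccover.
  destruct (HX (fun V => exists U, C U /\ V = fun x => U (f x))) as (l & Hl & Hsub).
  - intros V (U & HU & ->). apply Hf, Copen, HU.
  - intros x _. destruct (Ccover (f x)) as (U & HU & Ux); [eauto|].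
    exists (fun x => U (f x)). eauto.
  - destruct (choice (fun (V : X -> Prop) (U : Y -> Prop) =>
        (exists U', C U' /\ V = fun x => U' (f x)) -> C U /\ V = fun x => U (f x)))
      as [g Hg].
    { intro V. destruct (classic (exists U, C U /\ V = fun x => U (f x))) as [[U HU]|Hno];
        [exists U|exists (fun _ => True)]; tauto. }
    exists (map g l). split.
    + intros U HU. apply in_map_iff in HU. destruct HU as (V & <- & HV). apply Hg, Hl, HV.
    + intros y [x <-]. destruct (Hsub x I) as (V & HV & Vx).
      exists (g V). split; [apply in_map, HV|].
      destruct (Hg V (Hl V HV)) as [_ E]. rewrite E in Vx. exact Vx.
Qed.

Lemma compact_bounded (K : Sinf -> Prop) : compact_in Sinf_open K ->
  forall N, exists M, forall k, K k -> forall x, x < N -> fwd k x < M /\ bwd k x < M.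
Proof.
  intros HK N. apply (compact_increasing_cover Sinf_open K
                        (fun M q => forall x, x < N -> fwd q x < M /\ bwd q x < M) HK).
  - intros M q Hq. exists (N + M). intros r Hr x Hx. destruct (Hq x Hx) as [Hf Hb].
    assert (Hbwd : bwd r x = bwd q x)
      by (apply bwd_eq_of_fwd; rewrite Hr by lia; apply fwd_bwd).
    rewrite Hr, Hbwd by lia. auto.
  - intros M q Hq x Hx. destruct (Hq x Hx). lia.
  - intros q _. exists (S (list_max (map (fun x => fwd q x + bwd q x) (seq 0 N)))).
    intros x Hx.
    assert (fwd q x + bwd q x <= list_max (map (fun x => fwd q x + bwd q x) (seq 0 N))).
    { apply le_list_max, in_map_iff. exists x. split; [reflexivity|apply in_seq; lia]. }
    lia.
Qed.

Definition unbounded (A : nat -> Prop) : Prop := forall n, exists m, n <= m /\ A m.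

Fixpoint rank (A : nat -> Prop) (x : nat) : nat :=
  match x with
  | 0 => 0
  | S x => rank A x + if excluded_middle_informative (A x) then 1 else 0
  end.

Lemma rank_succ_in (A : nat -> Prop) (x : nat) : A x -> rank A (S x) = S (rank A x).
Proof. intro Ax. simpl. destruct (excluded_middle_informative (A x)); [lia|contradiction]. Qed.

Lemma rank_le (A : nat -> Prop) (x y : nat) : x <= y -> rank A x <= rank A y.
Proof. induction 1; simpl; lia. Qed.

Lemma rank_lt (A : nat -> Prop) (x y : nat) : A x -> x < y -> rank A x < rank A y.
Proof.
  intros Ax Hxy. pose proof (rank_le A (S x) y Hxy) as H.
  rewrite rank_succ_in in H by exact Ax. lia.
Qed.

Lemma rank_inj (A : nat -> Prop) (x y : nat) : A x -> A y -> rank A x = rank A y -> x = y.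
Proof.
  intros Ax Ay E. destruct (Nat.lt_trichotomy x y) as [H|[H|H]]; auto.
  - pose proof (rank_lt A x y Ax H). lia.
  - pose proof (rank_lt A y x Ay H). lia.
Qed.

Lemma rank_onto (A : nat -> Prop) : unbounded A -> forall i, exists x, A x /\ rank A x = i.
Proof.
  intros HA i.
  assert (Hbeyond : exists n, i < rank A n).
  { induction i as [|i [n Hn]].
    - destruct (HA 0) as (m & _ & Am). exists (S m). rewrite rank_succ_in by exact Am. lia.
    - destruct (HA n) as (m & Hnm & Am). exists (S m).
      pose proof (rank_le A n m Hnm). rewrite rank_succ_in by exact Am. lia. }
  destruct Hbeyond as [n Hn]. induction n as [|n IH]; [simpl in Hn; lia|].
  destruct (Nat.lt_ge_cases i (rank A n)) as [Hi|Hi]; [now apply IH|].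
  simpl in Hn. destruct (excluded_middle_informative (A n)) as [An|]; [|lia].
  exists n. split; [exact An|lia].
Qed.

Definition enum_of (A : nat -> Prop) (i : nat) : nat :=
  epsilon (inhabits 0) (fun x => A x /\ rank A x = i).

Lemma enum_of_spec (A : nat -> Prop) (i : nat) :
  unbounded A -> A (enum_of A i) /\ rank A (enum_of A i) = i.
Proof.
  intro HA. exact (epsilon_spec _ (fun x => A x /\ rank A x = i) (rank_onto A HA i)).
Qed.

Lemma enum_of_rank (A : nat -> Prop) (x : nat) : unbounded A -> A x -> enum_of A (rank A x) = x.
Proof. intros HA Ax. destruct (enum_of_spec A (rank A x) HA). now apply (rank_inj A). Qed.

(* Off the domain of the relation [G], the complement of the domain is mapped increasingly
   onto the complement of the range. *)
Definition extension (G : nat -> nat -> Prop) (x : nat) : nat :=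
  if excluded_middle_informative (exists y, G x y) then epsilon (inhabits 0) (G x)
  else enum_of (fun y => ~ exists x, G x y) (rank (fun x => ~ exists y, G x y) x).

Section Extension.

Variable G : nat -> nat -> Prop.
Hypothesis G_functional : forall x y y', G x y -> G x y' -> y = y'.
Hypothesis G_injective : forall x x' y, G x y -> G x' y -> x = x'.
Hypothesis dom_co_unbounded : unbounded (fun x => ~ exists y, G x y).
Hypothesis ran_co_unbounded : unbounded (fun y => ~ exists x, G x y).

Lemma extension_graph (x y : nat) : G x y -> extension G x = y.
Proof.
  intro Gxy. unfold extension. destruct (excluded_middle_informative _) as [Hx|Hx].
  - exact (G_functional _ _ _ (epsilon_spec _ _ Hx) Gxy).
  - exfalso. eauto.
Qed.

Lemma extension_cancel (x : nat) : extension (fun y x => G x y) (extension G x) = x.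
Proof.
  unfold extension at 2. destruct (excluded_middle_informative _) as [Hx|Hx].
  - set (y := epsilon _ _). assert (Gxy : G x y) by exact (epsilon_spec _ _ Hx).
    unfold extension. destruct (excluded_middle_informative _) as [Hy|Hy].
    + exact (G_injective _ _ _ (epsilon_spec _ _ Hy) Gxy).
    + exfalso. eauto.
  - destruct (enum_of_spec _ (rank (fun x => ~ exists y, G x y) x) ran_co_unbounded)
      as [Hy Hrank].
    unfold extension. destruct (excluded_middle_informative _) as [Hy'|_]; [contradiction|].
    rewrite Hrank. exact (enum_of_rank _ x dom_co_unbounded Hx).
Qed.

End Extension.

Lemma extend_partial_bijection (G : nat -> nat -> Prop) :
  (forall x y y', G x y -> G x y' -> y = y') ->
  (forall x x' y, G x y -> G x' y -> x = x') ->
  unbounded (fun x => ~ exists y, G x y) ->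
  unbounded (fun y => ~ exists x, G x y) ->
  exists p : Sinf, forall x y, G x y -> fwd p x = y.
Proof.
  intros Gfun Ginj Hdom Hran.
  exists (MkSinf (extension G) (extension (fun y x => G x y))
                 (extension_cancel (fun y x => G x y) (fun y y' x => Gfun x y y') Hran Hdom)
                 (extension_cancel G Ginj Hdom Hran)).
  exact (extension_graph G Gfun).
Qed.

Section Blocks.

Variable beta : nat -> nat.
Hypothesis beta_ge : forall n, n <= beta n.

(* [levels t = (src t, tgt t, len t)]: at time [t] the orbit of [0] under [p k] lies in
   [tgt t, tgt t + len t); [k] moves it into [src t, src t + len (S t)), which [p] translates
   onto the next target block. *)
Fixpoint levels (t : nat) : nat * nat * nat :=
  match t with
  | 0 => (0, 0, 1)
  | S t =>
      let '(c, e, s) := levels t in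
      let s' := beta (e + s) in
      let c' := c + s' + 1 in
      (c', beta c' + 1, s')
  end.

Definition src (t : nat) : nat := fst (fst (levels t)).
Definition tgt (t : nat) : nat := snd (fst (levels t)).
Definition len (t : nat) : nat := snd (levels t).

Lemma levels_succ (t : nat) :
  len (S t) = beta (tgt t + len t) /\ src (S t) = src t + len (S t) + 1 /\
  tgt (S t) = beta (src (S t)) + 1.
Proof. unfold src, tgt, len. simpl. now destruct (levels t) as [[c e] s]. Qed.

Lemma src_ge (t : nat) : t <= src t.
Proof. induction t; [unfold src; simpl; lia|]. destruct (levels_succ t) as (_ & H & _). lia. Qed.

Lemma tgt_ge (t : nat) : t <= tgt t.
Proof.
  destruct t as [|t]; [lia|]. destruct (levels_succ t) as (_ & _ & H).
  pose proof (beta_ge (src (S t))). pose proof (src_ge (S t)). lia.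
Qed.

Lemma src_block_lt (t u : nat) : t < u -> src t + len (S t) < src u.
Proof.
  induction 1 as [|u _ IH]; destruct (levels_succ t) as (_ & Ht & _); [lia|].
  destruct (levels_succ u) as (_ & Hu & _). lia.
Qed.

Lemma tgt_block_lt (t u : nat) : t < u -> tgt t + len t < tgt u.
Proof.
  assert (Hstep : forall t, tgt t + len t < tgt (S t)).
  { intro t'. destruct (levels_succ t') as (H1 & H2 & H3).
    pose proof (beta_ge (src (S t'))). pose proof (beta_ge (tgt t' + len t')). lia. }
  induction 1 as [|u _ IH]; [apply Hstep|]. specialize (Hstep u). lia.
Qed.

Lemma src_block_unique (t u z : nat) :
  src t <= z < src t + len (S t) -> src u <= z < src u + len (S u) -> t = u.
Proof.
  intros Ht Hu. destruct (Nat.lt_trichotomy t u) as [H|[H|H]]; auto;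
    apply src_block_lt in H; lia.
Qed.

Lemma tgt_block_unique (t u y : nat) :
  tgt t <= y < tgt t + len t -> tgt u <= y < tgt u + len u -> t = u.
Proof.
  intros Ht Hu. destruct (Nat.lt_trichotomy t u) as [H|[H|H]]; auto;
    apply tgt_block_lt in H; lia.
Qed.

Definition block_shift (z y : nat) : Prop :=
  exists t, src t <= z < src t + len (S t) /\ y = tgt (S t) + (z - src t).

Lemma exists_block_translate : exists p : Sinf, forall z y, block_shift z y -> fwd p z = y.
Proof.
  apply extend_partial_bijection.
  - intros z y y' (t & Ht & ->) (u & Hu & ->).
    now rewrite (src_block_unique t u z Ht Hu).
  - intros z z' y (t & Ht & Hy) (u & Hu & Hy').
    assert (t = u) as <-.
    { apply eq_add_S, (tgt_block_unique (S t) (S u) y); lia. }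
    lia.
  - intro n. exists (src n + len (S n)). split; [pose proof (src_ge n); lia|].
    intros (y & t & Ht & _).
    destruct (Nat.lt_trichotomy t n) as [H|[->|H]];
      [pose proof (src_block_lt t n H) | | pose proof (src_block_lt n t H)]; lia.
  - intro n. exists (tgt (S n) + len (S n)). split; [pose proof (tgt_ge (S n)); lia|].
    intros (z & t & Ht & Hy).
    destruct (Nat.lt_trichotomy t n) as [H|[->|H]];
      [pose proof (tgt_block_lt (S t) (S n) ltac:(lia)) | |
       pose proof (tgt_block_lt (S n) (S t) ltac:(lia))]; lia.
Qed.

Variable K : Sinf -> Prop.
Hypothesis K_bounded : forall k, K k -> forall x n, x < n -> fwd k x < beta n /\ bwd k x < beta n.

(* The bound on [bwd k] forces [k] to map the target block of time [t] above [src t]. *)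
Lemma orbit_in_target_block (p k : Sinf) :
  K k -> (forall z y, block_shift z y -> fwd p z = y) ->
  forall t, tgt t <= Nat.iter t (fwd (smul p k)) 0 < tgt t + len t.
Proof.
  intros Hk Hp t. induction t as [|t IH]; [unfold tgt, len; simpl; lia|].
  rewrite Nat.iter_succ. set (y := Nat.iter t _ 0) in *. simpl. set (z := fwd k y).
  assert (Hz : src t <= z < src t + len (S t)).
  { destruct (levels_succ t) as (Hlen & _ & _). split.
    - destruct t as [|t]; [unfold src; simpl; lia|].
      destruct (Nat.lt_ge_cases z (src (S t))) as [H|H]; [exfalso|exact H].
      destruct (K_bounded k Hk z (src (S t)) H) as [_ Hb].
      unfold z in Hb. rewrite bwd_fwd in Hb. destruct (levels_succ t) as (_ & _ & Htgt). lia.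
    - destruct (K_bounded k Hk y (tgt t + len t)) as [Hf _]; [lia|]. fold z in Hf. lia. }
  rewrite (Hp z (tgt (S t) + (z - src t))) by (exists t; auto). lia.
Qed.

Lemma exists_translate_infinite_cycle :
  exists p : Sinf, forall k, K k -> has_infinite_cycle (smul p k).
Proof.
  destruct exists_block_translate as [p Hp]. exists p. intros k Hk.
  exists 0. apply infinite_cycle_of_unbounded_orbit. intro M. exists M.
  pose proof (orbit_in_target_block p k Hk Hp M). pose proof (tgt_ge M). lia.
Qed.

End Blocks.

Theorem compact_translate_infinite_cycle (K : Sinf -> Prop) : compact_in Sinf_open K ->
  exists p : Sinf, forall k, K k -> has_infinite_cycle (smul p k).
Proof.
  intro HK. destruct (choice _ (compact_bounded K HK)) as [bound Hbound].
  apply (exists_translate_infinite_cycle (fun n => n + bound n)); [intro n; lia|].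
  intros k Hk x n Hx. destruct (Hbound n k Hk x Hx). lia.
Qed.

Section Baire.

Open Scope R_scope.

Variables (K : Type) (d : K -> K -> R).
Hypothesis d_metric : is_metric d.

Lemma ball_open (x : K) (r : R) : metric_open d (fun y => d x y < r).
Proof.
  destruct d_metric as (_ & _ & _ & Htri). intros y Hy. exists (r - d x y). split; [lra|].
  intros z Hz. pose proof (Htri x y z). lra.
Qed.

Lemma nowhere_dense_avoid_ball (F : K -> Prop) : nowhere_dense (metric_open d) F ->
  forall x r, 0 < r -> exists x' r', 0 < r' /\
    forall y, d x' y < r' -> d x y < r / 2 /\ ~ F y.
Proof.
  destruct d_metric as (_ & Hzero & _ & _). intros HF x r Hr.
  destruct (classic (forall y, d x y < r / 2 -> closure (metric_open d) F y)) as [Hcl|Hcl].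
  { exfalso. apply (HF _ (ball_open x (r / 2)) Hcl x). rewrite (proj2 (Hzero x x) eq_refl). lra. }
  apply not_all_ex_not in Hcl. destruct Hcl as [y Hy]. apply imply_to_and in Hy.
  destruct Hy as [Hxy Hy]. unfold closure in Hy. apply not_all_ex_not in Hy.
  destruct Hy as [V HV]. apply imply_to_and in HV. destruct HV as [Vopen HV].
  apply imply_to_and in HV. destruct HV as [Vy HVF].
  destruct (Vopen y Vy) as (e1 & He1 & H1). destruct (ball_open x (r / 2) y Hxy) as (e2 & He2 & H2).
  exists y, (Rmin e1 e2). split; [now apply Rmin_pos|]. intros z Hz.
  pose proof (Rmin_l e1 e2). pose proof (Rmin_r e1 e2). split.
  - apply H2. lra.
  - intro Fz. apply HVF. exists z. split; [apply H1; lra|exact Fz].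
Qed.

Hypothesis K_compact : compact_in (metric_open d) (fun _ => True).

Lemma compact_nested_balls (c : nat -> K) (r : nat -> R) :
  (forall n, 0 < r n) -> (forall n y, d (c (S n)) y <= r (S n) / 2 -> d (c n) y <= r n / 2) ->
  exists z, forall n, d (c n) z <= r n / 2.
Proof.
  destruct d_metric as (_ & Hzero & Hsym & Htri). intros Hpos Hnest.
  apply NNPP. intro Hempty.
  destruct (compact_increasing_cover (metric_open d) (fun _ => True)
              (fun n y => r n / 2 < d (c n) y) K_compact) as [M HM].
  - intros n y Hy. exists (d (c n) y - r n / 2). split; [lra|].
    intros z Hz. pose proof (Htri (c n) z y). rewrite (Hsym z y) in H. lra.
  - intros n y Hy. apply Rnot_le_lt. intro H. apply Hnest in H. lra.
  - intros y _. apply NNPP. intro Hno. apply Hempty. exists y. intro n.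
    apply Rnot_lt_le. intro H. apply Hno. eauto.
  - specialize (HM (c M) I). rewrite (proj2 (Hzero _ _) eq_refl) in HM.
    specialize (Hpos M). lra.
Qed.

Theorem compact_metric_not_meager (A : K -> Prop) :
  inhabited K -> meager (metric_open d) A -> ~ forall x, A x.
Proof.
  intros [x0] (F & HF & HA) Hall.
  destruct (choice (fun (nxr : nat * (K * R)) (xr' : K * R) =>
      0 < snd (snd nxr) -> 0 < snd xr' /\
      forall y, d (fst xr') y < snd xr' ->
        d (fst (snd nxr)) y < snd (snd nxr) / 2 /\ ~ F (fst nxr) y)) as [step Hstep].
  { intros [n [x r]]. destruct (Rlt_dec 0 r) as [Hr|Hr].
    - destruct (nowhere_dense_avoid_ball _ (HF n) x r Hr) as (x' & r' & H).
      now exists (x', r').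
    - exists (x, r). simpl. intro. contradiction. }
  pose (ball := nat_rect (fun _ => (K * R)%type) (x0, 1) (fun n xr => step (n, xr))).
  assert (Hpos : forall n, 0 < snd (ball n)).
  { induction n as [|n IH]; simpl; [lra|]. apply (Hstep (n, ball n)), IH. }
  assert (Hshrink : forall n y, d (fst (ball (S n))) y < snd (ball (S n)) ->
                      d (fst (ball n)) y < snd (ball n) / 2 /\ ~ F n y)
    by (intros n; apply (Hstep (n, ball n)), Hpos).
  destruct (compact_nested_balls (fun n => fst (ball n)) (fun n => snd (ball n)) Hpos)
    as [z Hz].
  { intros n y Hy. pose proof (Hpos (S n)). destruct (Hshrink n y) as [Hlt _]; lra. }
  destruct (HA z (Hall z)) as [n Hn]. pose proof (Hz (S n)). pose proof (Hpos (S n)).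
  destruct (Hshrink n z) as [_ HnF]; [lra|contradiction].
Qed.

End Baire.

Lemma Sinf_eq (p q : Sinf) : (forall n, fwd p n = fwd q n) -> p = q.
Proof.
  destruct p as [f g fg gf], q as [f' g' fg' gf']. simpl. intro H.
  apply functional_extensionality in H. subst f'.
  assert (g = g') as <-.
  { apply functional_extensionality. intro n. rewrite <- (fg' n) at 1. apply gf. }
  f_equal; apply proof_irrelevance.
Qed.

Definition id_perm : Sinf := MkSinf (fun n => n) (fun n => n) (fun _ => eq_refl) (fun _ => eq_refl).

Theorem has_infinite_cycle_not_haar_meager : ~ haar_meager has_infinite_cycle.
Proof.
  intros (B & _ & HB & K & d & HK & Hd & Hcompact & f & Hf & Hmeager).
  destruct (compact_translate_infinite_cycle _ (compact_image _ _ f Hf Hcompact)) as [p Hp].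
  apply (compact_metric_not_meager K d Hd Hcompact _ HK (Hmeager (inv p) id_perm)).
  intro x. replace (smul (inv (inv p)) (smul (f x) (inv id_perm))) with (smul p (f x))
    by (apply Sinf_eq; reflexivity).
  apply HB, Hp. eauto.
Qed.

Theorem mainTheorem16 :
  (forall K : Sinf -> Prop, compact_in Sinf_open K ->
     exists p : Sinf, forall k, K k -> has_infinite_cycle (smul p k)) /\
  ~ haar_meager has_infinite_cycle /\
  meager Sinf_open has_infinite_cycle.
Proof.
  split; [exact compact_translate_infinite_cycle|].
  split; [exact has_infinite_cycle_not_haar_meager | exact has_infinite_cycle_meager].
Qed.
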